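(* On $\mathbf W$ we have $p^\perp(\mathcal X)\,h^\perp_{D-1}(\mathcal X)=0$, where $p^\perp(\eta)=\eta^{-1}(\eta-\tau)(\eta-\tau^{-1}q^{-D})$ and $h^\perp_{D-1}(\eta)=\eta^{1-D}\prod_{n=1}^{D-1}(\eta-\tau q^n)(\eta-\tau^{-1}q^{-n})$ with $\tau=\sqrt{-1}\,q^{-(D+e)/2}$.
   Context: Dual polar graph setting: $q$ a prime power, $D\ge3$; $\mathbb V$ one of: $2D$-dim. over $\mathbb F_q$ with non-degenerate alternating form ($e=1$); $(2D+1)$-dim. quadratic ($e=1$); $2D$-dim. quadratic of Witt index $D$ ($e=0$); $(2D+2)$-dim. quadratic of Witt index $D$ ($e=2$); $(2D+1)$-dim. Hermitian, $q=r^2$ ($e=3/2$); $2D$-dim. Hermitian, $q=r^2$ ($e=1/2$). $X$ is the set of maximal isotropic subspaces, $\Gamma$ the graph on $X$ with $y\sim z$ iff $\dim(y\cap z)=D-1$, $\partial$ path-length distance, $\Gamma_i(y)=\{z:\partial(y,z)=i\}$. Fix a vertex $x$ and maximal clique $C\ni x$; for $0\le i\le D-1$, $C_i=\{y:\min_{z\in C}\partial(y,z)=i\}$, $C_i^-=\Gamma_i(x)\cap C_i$, $C_i^+=\Gamma_{i+1}(x)\cap C_i$. In $V=\mathbb C^X$, $\hat Y$ is the characteristic vector of $Y$; $\mathbf W=\operatorname{span}\{\hat C_i^\pm\}$ with ordered basis $(\hat C_0^-,\hat C_0^+,\dots,\hat C_{D-1}^-,\hat C_{D-1}^+)$. Define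 $2\times2$ matrices $t(i)=\begin{pmatrix} q^{-e/2}-q^{e/2} & q^{e/2}\\ q^{-e/2}&0\end{pmatrix}$ ($0\le i\le D-1$), $t'(i)=\sqrt{-1}\begin{pmatrix} q^{-D/2}(q^D-q^i+1) & q^{D/2}(q^{i-D}-1)\\ q^{-D/2}(1-q^i) & q^{i-D/2}\end{pmatrix}$ ($1\le i\le D-1$), and $t'(0)=t'(D)=(\sqrt{-1}\,q^{-D/2})$; $\mathfrak t=\operatorname{blockdiag}(t(0),\dots,t(D-1))$, $\mathfrak t'=\operatorname{blockdiag}(t'(0),\dots,t'(D))$. $\mathcal X$ is the invertible operator on $\mathbf W$ with matrix $\mathfrak t'\mathfrak t$ in the ordered basis above. *)

From mathcomp Require Import all_boot all_order all_algebra all_field.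
Unset Printing Implicit Defensive.
Import Order.TTheory GRing.Theory Num.Theory.
Local Open Scope ring_scope.

(* Parameters: q (prime power), D, and e2 = 2e in {0,1,2,3,4}
   (e in {0,1/2,1,3/2,2}).  qp q k = q^(k/4) (positive real 4th root). *)
Definition qp (q : nat) (k : int) : algC := (4.-root (q%:R : algC)) ^ k.

(* entries of t(i) (independent of i), positions a,b : bool (false = 1st) *)
Definition t_ent (q e2 : nat) (a b : bool) : algC :=
  match a, b with
  | false, false => qp q (- (e2%:Z)) - qp q e2
  | false, true => qp q e2
  | true, false => qp q (- (e2%:Z))
  | true, true => 0
  end.

Definition tp_ent (q D k : nat) (a b : bool) : algC :=
  if (k == 0)%N || (k == D) then 'i * qp q (- (2 * D)%:Z) else
  'i * match a, b with
  | false, false => qp q (- (2 * D)%:Z) * ((q%:R) ^+ D - (q%:R) ^+ k + 1)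
  | false, true => qp q ((2 * D)%:Z) * ((q%:R : algC) ^ (k%:Z - D%:Z) - 1)
  | true, false => qp q (- (2 * D)%:Z) * (1 - (q%:R) ^+ k)
  | true, true => qp q ((4 * k)%:Z - (2 * D)%:Z)
  end.

(* ordered basis indices 0..2D-1: index 2i is C_i^-, 2i+1 is C_i^+ *)
(* frak t = blockdiag(t(0),...,t(D-1)): block of index j is j/2, position odd j *)
Definition tmat (q D e2 : nat) : 'M[algC]_(D.*2) :=
  \matrix_(i, j) if (i./2 == j./2)%N then t_ent q e2 (odd i) (odd j) else 0.

(* frak t' = blockdiag(t'(0) [1x1], t'(1),...,t'(D-1) [2x2], t'(D) [1x1]):
   block of index j is (j+1)/2; within a 2x2 block, index 2k-1 is the first
   position and 2k the second, i.e. position = ~~ odd j. *)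
Definition tpmat (q D : nat) : 'M[algC]_(D.*2) :=
  \matrix_(i, j) if (i.+1./2 == j.+1./2)%N
                 then tp_ent q D (i.+1./2) (~~ odd i) (~~ odd j) else 0.

Definition Xmat (q D e2 : nat) : 'M[algC]_(D.*2) := tpmat q D *m tmat q D e2.

Definition tau (q D e2 : nat) : algC := 'i * qp q (- (2 * D + e2)%:Z).

Definition p_perp (q D e2 : nat) (X : 'M[algC]_(D.*2)) : 'M[algC]_(D.*2) :=
  invmx X * ((X - (tau q D e2)%:M) * (X - ((tau q D e2)^-1 * (q%:R)^-D)%:M)).

Definition h_perp (q D e2 : nat) (X : 'M[algC]_(D.*2)) : 'M[algC]_(D.*2) :=
  invmx X ^+ (D - 1) *
  \prod_(1 <= n < D) ((X - (tau q D e2 * (q%:R) ^+ n)%:M) *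
                      (X - ((tau q D e2)^-1 * (q%:R) ^- n)%:M)).

Definition prime_power (q : nat) : Prop :=
  exists p k : nat, prime p /\ (0 < k)%N /\ q = (p ^ k)%N.

From mathcomp Require Import all_boot all_order all_algebra all_field.
From mathcomp Require Import zify ring.
Import GRing.Theory Num.Theory.
Local Open Scope ring_scope.

(* Write [gvec x] for the vector with entry x^i on both C_i^- and C_i^+, and
   [gvec_odd x] for its C_i^+ part.  A direct computation with the block
   matrices gives X (gvec 1) = tau (gvec 1) and, for x = y/q, shows that
   (X - tau/x) (gvec x) and (X - tau^-1 x) (gvec_odd x) are combinations of
   gvec y, gvec_odd y and gvec_odd x.  Hence X is triangular on the flag
   gvec 1, gvec_odd q^-1, gvec q^-1, gvec_odd q^-2, ..., gvec_odd q^-D with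
   diagonal tau, tau^-1 q^-1, tau q, ..., tau^-1 q^-D, so the product of the
   2D factors X - (diagonal entry) kills the flag.  The flag spans W (two
   Vandermonde systems in the distinct ratios q^-k), so that product is 0,
   and p^perp(X) h^perp_{D-1}(X) is that product times a power of X^-1. *)

Definition ord_even {n} (i : 'I_n) : 'I_n.*2 :=
  Ordinal (etrans (ltn_double i n) (ltn_ord i)).
Definition ord_odd {n} (i : 'I_n) : 'I_n.*2 :=
  Ordinal (etrans (ltn_Sdouble i n) (ltn_ord i)).
Definition ord_half {n} (c : 'I_n.*2) : 'I_n :=
  Ordinal (etrans (ltn_half_double c n) (ltn_ord c)).

Lemma ord_evenK {n} (c : 'I_n.*2) : ~~ odd c -> ord_even (ord_half c) = c.
Proof. by move=> /negbTE ev; apply: val_inj; rewrite /= -[RHS]odd_double_half ev. Qed.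

Lemma ord_oddK {n} (c : 'I_n.*2) : odd c -> ord_odd (ord_half c) = c.
Proof. by move=> od; apply: val_inj; rewrite /= -[RHS]odd_double_half od. Qed.

Lemma ord_even_or_odd {n} (c : 'I_n.*2) :
  (exists i, c = ord_even i) \/ (exists i, c = ord_odd i).
Proof.
case/boolP: (odd c) => [/ord_oddK | /ord_evenK] <-; [right | left]; by eexists.
Qed.

Lemma big_ord_double (R : Type) (idx : R) (op : Monoid.com_law idx) n
    (F : 'I_n.*2 -> R) :
  \big[op/idx]_(c < n.*2) F c =
  \big[op/idx]_(i < n) op (F (ord_even i)) (F (ord_odd i)).
Proof.
rewrite big_split (bigID (fun c : 'I_n.*2 => odd c)) /= Monoid.mulmC.
congr (op _ _).
- rewrite (reindex_onto ord_even ord_half) => [|c]; last exact: ord_evenK.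
  by apply: eq_bigl => i; rewrite /= odd_double; apply/eqP/val_inj/doubleK.
- rewrite (reindex_onto ord_odd ord_half) => [|c]; last exact: ord_oddK.
  by apply: eq_bigl => i; rewrite /= odd_double; apply/eqP/val_inj/uphalf_double.
Qed.

Lemma big_nat_pairs (R : Type) (idx : R) (op : Monoid.law idx) (F : nat -> R) n :
  (0 < n)%N -> \big[op/idx]_(0 <= i < n.*2) F i =
  op (op (F 0%N) (\big[op/idx]_(1 <= k < n) op (F k.*2.-1) (F k.*2))) (F n.*2.-1).
Proof.
case: n => // n _; elim: n => [|n IH].
  by rewrite -[1.*2]/2%N big_nat_recr // big_nat1 big_geq // Monoid.mulm1.
rewrite doubleS big_nat_recr // big_nat_recr //= IH [in RHS]big_nat_recr //=.
by rewrite !Monoid.mulmA.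
Qed.

(* Index 2i carries f i and index 2i+1 carries g i, matching the ordering
   C_0^-, C_0^+, C_1^-, ... of the basis of W. *)
Definition interleave {R : Type} {n} (f g : nat -> R) : 'cV[R]_n.*2 :=
  \col_r (if odd r then g r./2 else f r./2).

Lemma interleave_even (R : Type) n (f g : nat -> R) (i : 'I_n) :
  interleave f g (ord_even i) 0 = f i.
Proof. by rewrite mxE /= odd_double doubleK. Qed.

Lemma interleave_odd (R : Type) n (f g : nat -> R) (i : 'I_n) :
  interleave f g (ord_odd i) 0 = g i.
Proof. by rewrite mxE /= odd_double uphalf_double. Qed.

Lemma mulmx_interleaveE (R : pzSemiRingType) m n (A : 'M[R]_(m, n.*2)) f g r :
  (A *m interleave f g) r 0 =
  \sum_(i < n) (A r (ord_even i) * f i + A r (ord_odd i) * g i).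
Proof.
rewrite mxE big_ord_double.
by apply: eq_bigr => i _; rewrite interleave_even interleave_odd.
Qed.

Lemma geometric_cols_free (F : fieldType) m n (B : 'M[F]_(m, n)) (x : 'I_n -> F) :
  injective x -> (forall k, B *m \col_i (x k ^+ i) = 0) -> B = 0.
Proof.
move=> x_inj Bx0; set V := Vandermonde n (\row_k x k).
have BV0 : B *m V = 0.
  apply/matrixP => r k; transitivity ((B *m \col_i (x k ^+ i)) r 0).
    by rewrite !mxE; apply: eq_bigr => i _; rewrite !mxE.
  by rewrite Bx0 !mxE.
have V_unit : V \in unitmx.
  rewrite unitmxE det_Vandermonde unitfE; apply/prodf_neq0 => i _.
  apply/prodf_neq0 => j ltij; rewrite !mxE subr_eq0; apply/eqP => /x_inj eqji.
  by move: ltij; rewrite eqji ltnn.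
by rewrite -(mulmxK V_unit B) BV0 mul0mx.
Qed.

Lemma interleave_geometric_span (F : fieldType) m n (A : 'M[F]_(m, n.*2))
    (x y : 'I_n -> F) : injective x -> injective y ->
  (forall k, A *m interleave (GRing.exp (x k)) (GRing.exp (x k)) = 0) ->
  (forall k, A *m interleave (fun=> 0) (GRing.exp (y k)) = 0) -> A = 0.
Proof.
move=> x_inj y_inj Ax0 Ay0.
have odd0 : \matrix_(r < m, i < n) A r (ord_odd i) = 0.
  apply: (@geometric_cols_free _ _ _ _ y y_inj) => k; apply/colP => r.
  transitivity ((A *m interleave (fun=> 0) (GRing.exp (y k))) r 0).
    rewrite mulmx_interleaveE !mxE.
    by apply: eq_bigr => i _; rewrite !mxE mulr0 add0r.
  by rewrite Ay0 !mxE.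
have oddE r i : A r (ord_odd i) = 0.
  by have /matrixP/(_ r i) := odd0; rewrite !mxE.
have even0 : \matrix_(r < m, i < n) A r (ord_even i) = 0.
  apply: (@geometric_cols_free _ _ _ _ x x_inj) => k; apply/colP => r.
  transitivity ((A *m interleave (GRing.exp (x k)) (GRing.exp (x k))) r 0).
    rewrite mulmx_interleaveE !mxE.
    by apply: eq_bigr => i _; rewrite !mxE oddE mul0r addr0.
  by rewrite Ax0 !mxE.
have evenE r i : A r (ord_even i) = 0.
  by have /matrixP/(_ r i) := even0; rewrite !mxE.
apply/matrixP => r c; rewrite mxE.
by have [[i ->]|[i ->]] := ord_even_or_odd c; rewrite ?evenE ?oddE.
Qed.

Lemma prod_mx_annihilates_flag (R : pzRingType) n N (F : nat -> 'M[R]_n)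
    (v : nat -> 'cV[R]_n) :
  (forall i j, GRing.comm (F i) (F j)) ->
  (forall j (A : 'M[R]_n), (j < N)%N ->
     (forall i, (i < j)%N -> A *m v i = 0) -> A *m (F j *m v j) = 0) ->
  forall j, (j < N)%N -> (\prod_(0 <= i < N) F i) *m v j = 0.
Proof.
move=> Fcomm; elim: N => // N IH Fv j; rewrite big_nat_recr //= -mulmxE.
have IHN : forall i, (i < N)%N -> (\prod_(0 <= i < N) F i) *m v i = 0.
  by apply: IH => k A ltkN; apply: Fv; apply: ltnW.
rewrite ltnS leq_eqVlt => /predU1P[-> | ltjN]; first by rewrite -mulmxA Fv.
have /commr_sym FNcomm : GRing.comm (F N) (\prod_(0 <= i < N) F i).
  by apply: commr_prod => i _.
by rewrite mulmxE FNcomm -mulmxE -mulmxA IHN // mulmx0.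
Qed.

Lemma comm_scalar_mx (R : comPzRingType) n (A : 'M[R]_n) a : GRing.comm A a%:M.
Proof. by rewrite /GRing.comm -!mulmxE scalar_mxC. Qed.

Lemma comm_mx_subC (R : comPzRingType) n (A : 'M[R]_n) a b :
  GRing.comm (A - a%:M) (A - b%:M).
Proof.
have scalar_comm (c : R) : GRing.comm c%:M A by apply/commr_sym/comm_scalar_mx.
apply: commrB; apply/commr_sym/commrB; rewrite ?commr_refl ?scalar_comm //;
  exact: comm_scalar_mx.
Qed.

Lemma comm_invmx_subC (R : comUnitRingType) n (A : 'M[R]_n) a :
  GRing.comm (invmx A) (A - a%:M).
Proof.
apply: commrB; last exact: comm_scalar_mx.
have [Au | /invmx_out ->] := boolP (A \in unitmx); last exact: commr_refl.
by rewrite /GRing.comm -!mulmxE mulVmx ?mulmxV.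
Qed.

Lemma sum_ord_eq_mul (R : pzSemiRingType) n k (a : R) (F : nat -> R) :
  \sum_(i < n) (if k == i :> nat then a else 0) * F i =
  if (k < n)%N then a * F k else 0.
Proof.
under eq_bigr do rewrite (fun_if (fun x => x * _)) mul0r.
rewrite -big_mkcond (eq_bigl _ _ (fun i => eq_sym _ _)).
exact: (big_ord1_eq _ (fun j => a * F j)).
Qed.

Section DualPolar.
Variables (q D e2 : nat).
Hypotheses (q_gt1 : (1 < q)%N) (D_gt0 : (0 < D)%N).

(* h = q^(e/2), and s = sqrt(-1) q^(-D/2) is the common factor of all t'(i). *)
Local Notation Q := (q%:R : algC).
Local Notation h := (qp q e2).
Local Notation s := ('i * qp q (- (2 * D)%:Z)).
Local Notation X := (Xmat q D e2).
Local Notation "'τ'" := (tau q D e2).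

Lemma Q_neq0 : Q != 0. Proof. by rewrite pnatr_eq0 -lt0n ltnW. Qed.

Lemma qp_neq0 k : qp q k != 0.
Proof. by rewrite expfz_neq0 // rootC_eq0 // Q_neq0. Qed.

Lemma qpN k : qp q (- k) = (qp q k)^-1.
Proof. by rewrite /qp invr_expz. Qed.

Lemma qp_mul4 k : qp q (4 * k)%:Z = Q ^+ k.
Proof. by rewrite /qp -exprnP exprM rootCK. Qed.

Lemma qp_2D_sqr : qp q (2 * D)%:Z ^+ 2 = Q ^+ D.
Proof. by rewrite -(qp_mul4 D) /qp -!exprnP -exprM; congr (_ ^+ _); lia. Qed.

Lemma s_neq0 : s != 0.
Proof. by rewrite mulf_neq0 ?neq0Ci ?qp_neq0. Qed.

Lemma tauE : τ = s / h.
Proof.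
rewrite /tau PoszD opprD /qp expfzDr ?rootC_eq0 ?Q_neq0 //.
by rewrite -[_ ^ (- e2%:Z)]invr_expz mulrA.
Qed.

Lemma s_sqrM : s ^+ 2 * Q ^+ D = -1.
Proof.
by rewrite -qp_2D_sqr exprMn sqrCi qpN exprVn mulfVK // expf_neq0 // qp_neq0.
Qed.

Lemma invtauE : τ^-1 = - (s * h * Q ^+ D).
Proof.
have QD : Q ^+ D = - (s ^+ 2)^-1.
  have s2_neq0 : s ^+ 2 != 0 by rewrite expf_neq0 // s_neq0.
  by apply: (mulfI s2_neq0); rewrite s_sqrM mulrN mulfV.
by rewrite tauE QD; field; rewrite ?qp_neq0 ?neq0Ci.
Qed.

Lemma tmat_interleave (f g : nat -> algC) : tmat q D e2 *m interleave f g =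
  interleave (fun k => (h^-1 - h) * f k + h * g k) (fun k => h^-1 * f k).
Proof.
apply/colP => r; rewrite mulmx_interleaveE.
have [[k ->]|[k ->]] := ord_even_or_odd r;
  rewrite ?interleave_even ?interleave_odd (bigD1 k) //= big1 => [|i];
  rewrite !mxE /= ?odd_double ?doubleK ?uphalf_double ?eqxx /= ?qpN;
  rewrite ?mul0r ?addr0 //;
  by rewrite -val_eqE eq_sym => /negbTE ->; rewrite !mul0r addr0.
Qed.

Lemma qp_sub4 k : qp q ((4 * k)%:Z - (2 * D)%:Z) = qp q (- (2 * D)%:Z) * Q ^+ k.
Proof.
by rewrite /qp expfzDr ?rootC_eq0 ?Q_neq0 // -exprnP exprM rootCK // mulrC.
Qed.

Lemma qp_2D_subD k :
  qp q (2 * D)%:Z * (Q ^ (k%:Z - D%:Z) - 1) =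
  qp q (- (2 * D)%:Z) * (Q ^+ k - Q ^+ D).
Proof.
rewrite expfzDr ?Q_neq0 // -exprnN qpN -exprnP -qp_2D_sqr.
by field; rewrite qp_neq0.
Qed.

Lemma tp_ent_edge k a b : (k == 0)%N || (k == D) -> tp_ent q D k a b = s.
Proof. by rewrite /tp_ent => ->. Qed.

Definition tp_block (k : nat) (a b : bool) : algC :=
  match a, b with
  | false, false => Q ^+ D - Q ^+ k + 1
  | false, true => Q ^+ k - Q ^+ D
  | true, false => 1 - Q ^+ k
  | true, true => Q ^+ k
  end.

Lemma tp_entE k a b : (0 < k < D)%N -> tp_ent q D k a b = s * tp_block k a b.
Proof.
move=> /andP[k_gt0 lt_kD].
rewrite /tp_ent ifF; last by rewrite eqn0Ngt k_gt0 ltn_eqF.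
by case: a; case: b; rewrite /= ?qp_sub4 ?qp_2D_subD mulrA.
Qed.

(* The terms g k.-1 at k = 0 and f k.+1 at k = D - 1 have coefficient 0: this is
   how the 1x1 blocks t'(0) and t'(D) fit the formula of the 2x2 blocks. *)
Lemma tpmat_interleave (f g : nat -> algC) : tpmat q D *m interleave f g =
  s *: interleave (fun k => Q ^+ k * f k + (1 - Q ^+ k) * g k.-1)
    (fun k => (Q ^+ D - Q ^+ k.+1 + 1) * g k + (Q ^+ k.+1 - Q ^+ D) * f k.+1).
Proof.
apply/colP => r; rewrite mulmx_interleaveE big_split [RHS]mxE /=.
have [[k ->]|[k ->]] := ord_even_or_odd r; rewrite ?interleave_even ?interleave_odd;
  under eq_bigr do rewrite !mxE /= ?odd_double ?doubleK ?uphalf_double /=;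
  under [X in _ + X]eq_bigr do rewrite !mxE /= ?odd_double ?doubleK ?uphalf_double /=.
- case: k => [[|k] /= lt_kD].
  + rewrite sum_ord_eq_mul lt_kD big1 => [|i _]; last by rewrite mul0r.
    by rewrite tp_ent_edge // expr0; ring.
  + rewrite sum_ord_eq_mul lt_kD.
    under eq_bigr do rewrite eqSS.
    by rewrite sum_ord_eq_mul ltnW // !tp_entE //=; ring.
- rewrite sum_ord_eq_mul; under eq_bigr do rewrite eqSS.
  rewrite sum_ord_eq_mul ltn_ord.
  case: ltnP => [lt_kD | ge_kD]; first by rewrite !tp_entE //=; ring.
  have -> : k.+1 = D by apply/eqP; rewrite eqn_leq ge_kD ltn_ord.
  by rewrite tp_ent_edge ?eqxx ?orbT //; ring.
Qed.

Lemma Xmat_interleave (f g : nat -> algC) : X *m interleave f g =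
  s *: interleave
    (fun k => Q ^+ k * ((h^-1 - h) * f k + h * g k)
              + (1 - Q ^+ k) * (h^-1 * f k.-1))
    (fun k => (Q ^+ D - Q ^+ k.+1 + 1) * (h^-1 * f k)
              + (Q ^+ k.+1 - Q ^+ D) * ((h^-1 - h) * f k.+1 + h * g k.+1)).
Proof. by rewrite /Xmat -mulmxA tmat_interleave tpmat_interleave. Qed.

Definition gvec (x : algC) : 'cV[algC]_D.*2 :=
  interleave (GRing.exp x) (GRing.exp x).
Definition gvec_odd (x : algC) : 'cV[algC]_D.*2 :=
  interleave (fun=> 0) (GRing.exp x).

Lemma Xmat_gvec1 : (X - τ%:M) *m gvec 1 = 0.
Proof.
rewrite mulmxBl mul_scalar_mx Xmat_interleave tauE; apply/colP => r.
by rewrite !mxE; case: (odd r); rewrite !expr1n; field; exact: qp_neq0.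
Qed.

Lemma Xmat_gvec (y : algC) : y != 0 ->
  (X - (τ / (y / Q))%:M) *m gvec (y / Q) =
  (τ * (Q / y - 1)) *:
    ((Q ^+ D * (y / Q) - 1) *: gvec_odd (y / Q) + (1 - y) *: gvec_odd y - gvec y).
Proof.
move=> y_neq0; rewrite mulmxBl mul_scalar_mx Xmat_interleave tauE.
apply/colP => r.
rewrite !mxE; case: (odd r); last case: (r./2) => [|k].
all: rewrite ?expr0 ?exprS ?expr_div_n; field.
all: by rewrite ?qp_neq0 ?y_neq0 ?expf_neq0 ?Q_neq0.
Qed.

Lemma Xmat_gvec_odd (y : algC) :
  (X - (τ^-1 * (y / Q))%:M) *m gvec_odd (y / Q) =
  (s * h) *: (gvec y - (1 - y) *: gvec_odd y).
Proof.
rewrite mulmxBl mul_scalar_mx Xmat_interleave invtauE; apply/colP => r.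
rewrite !mxE; case: (odd r).
all: rewrite ?exprS ?expr_div_n; field.
all: by rewrite ?qp_neq0 ?expf_neq0 ?Q_neq0.
Qed.

Definition flag_root j : algC :=
  if odd j then τ^-1 * Q ^- uphalf j else τ * Q ^+ j./2.
Definition flag_vec j :=
  if odd j then gvec_odd (Q ^- uphalf j) else gvec (Q ^- j./2).

Lemma flag_root_even m : flag_root m.*2 = τ * Q ^+ m.
Proof. by rewrite /flag_root odd_double doubleK. Qed.

Lemma flag_root_odd m : flag_root m.*2.+1 = τ^-1 * Q ^- m.+1.
Proof. by rewrite /flag_root /= odd_double /= doubleK. Qed.

Lemma flag_vec_even m : flag_vec m.*2 = gvec (Q ^- m).
Proof. by rewrite /flag_vec odd_double doubleK. Qed.

Lemma flag_vec_odd m : flag_vec m.*2.+1 = gvec_odd (Q ^- m.+1).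
Proof. by rewrite /flag_vec /= odd_double /= doubleK. Qed.

Lemma expr_invS m : Q ^- m / Q = Q ^- m.+1.
Proof. by rewrite exprSr invfM. Qed.

Section FlagStep.
Variable A : 'M[algC]_D.*2.

Lemma flag_kills_gvec_odd m j : (forall i, (i < j)%N -> A *m flag_vec i = 0) ->
  (m.*2 < j)%N -> A *m ((1 - Q ^- m) *: gvec_odd (Q ^- m)) = 0.
Proof.
case: m => [_ _|m Akills lt_mj]; first by rewrite expr0 invr1 subrr scale0r mulmx0.
by rewrite -scalemxAr -flag_vec_odd Akills ?scaler0 // (leq_trans _ lt_mj).
Qed.

Lemma flag_step_odd m : (forall i, (i < m.*2.+1)%N -> A *m flag_vec i = 0) ->
  A *m ((X - (flag_root m.*2.+1)%:M) *m flag_vec m.*2.+1) = 0.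
Proof.
move=> Akills; rewrite flag_root_odd flag_vec_odd -expr_invS Xmat_gvec_odd.
rewrite -scalemxAr mulmxBr (flag_kills_gvec_odd _ _ Akills) //.
by rewrite -flag_vec_even Akills // subr0 scaler0.
Qed.

Lemma flag_step_even m : (forall i, (i < m.*2.+2)%N -> A *m flag_vec i = 0) ->
  A *m ((X - (flag_root m.*2.+2)%:M) *m flag_vec m.*2.+2) = 0.
Proof.
move=> Akills; rewrite -doubleS flag_root_even flag_vec_even -expr_invS.
have -> : τ * Q ^+ m.+1 = τ / (Q ^- m / Q) by rewrite expr_invS invrK.
rewrite Xmat_gvec ?invr_eq0 ?expf_neq0 ?Q_neq0 //.
rewrite -scalemxAr mulmxBr mulmxDr (flag_kills_gvec_odd _ _ Akills) //.
rewrite -scalemxAr expr_invS -flag_vec_odd -flag_vec_even !Akills //.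
by rewrite !scaler0 addr0 subr0 scaler0.
Qed.

End FlagStep.

Lemma flag_step j (A : 'M[algC]_D.*2) :
  (forall i, (i < j)%N -> A *m flag_vec i = 0) ->
  A *m ((X - (flag_root j)%:M) *m flag_vec j) = 0.
Proof.
case: j => [_|j].
  rewrite -[0%N]/(0.*2) flag_root_even flag_vec_even expr0 invr1 mulr1.
  by rewrite Xmat_gvec1 mulmx0.
rewrite -(odd_double_half j); case: (odd j) => /=.
  exact: flag_step_even.
exact: flag_step_odd.
Qed.

Lemma invQ_expr_inj : injective (fun k => Q ^- k).
Proof.
move=> i j /invr_inj; apply: ieexprIn; first by rewrite ltr0n ltnW.
by rewrite pnatr_eq1 gtn_eqF.
Qed.

Lemma flag_prod_eq0 : \prod_(0 <= i < D.*2) (X - (flag_root i)%:M) = 0.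
Proof.
set F := fun i => X - (flag_root i)%:M.
have Pkills j : (j < D.*2)%N -> (\prod_(0 <= i < D.*2) F i) *m flag_vec j = 0.
  move: j; apply: prod_mx_annihilates_flag.
    by move=> i k; apply: comm_mx_subC.
  by move=> k A _; apply: flag_step.
apply: (@interleave_geometric_span _ _ _ _ (fun k => Q ^- k) (fun k => Q ^- k.+1)).
- by move=> i k /invQ_expr_inj /val_inj.
- by move=> i k /invQ_expr_inj [] /val_inj.
- by move=> k; have := Pkills k.*2; rewrite flag_vec_even ltn_double ltn_ord; apply.
- by move=> k; have := Pkills k.*2.+1; rewrite flag_vec_odd ltn_Sdouble ltn_ord; apply.
Qed.

Lemma flag_prodE : \prod_(0 <= i < D.*2) (X - (flag_root i)%:M) =
  (X - τ%:M) * \prod_(1 <= n < D) ((X - (τ * Q ^+ n)%:M) * (X - (τ^-1 * Q ^- n)%:M))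
  * (X - (τ^-1 * Q ^- D)%:M).
Proof.
have root0 : flag_root 0 = τ by rewrite /flag_root /= expr0 mulr1.
have rootD : flag_root D.*2.-1 = τ^-1 * Q ^- D.
  have -> : D.*2.-1 = D.-1.*2.+1 by rewrite -(prednK D_gt0) doubleS.
  by rewrite flag_root_odd prednK.
rewrite big_nat_pairs // root0 rootD; congr (_ * _ * _).
transitivity (\prod_(1 <= k < D)
                ((X - (flag_root k.*2.-1)%:M) * (X - (flag_root k.*2)%:M))); first by [].
apply: eq_big_nat => k /andP[k_gt0 _].
have -> : k.*2.-1 = k.-1.*2.+1 by rewrite -(prednK k_gt0).
by rewrite flag_root_odd flag_root_even prednK //; apply: comm_mx_subC.
Qed.

Lemma p_perp_h_perp_Xmat : p_perp q D e2 X * h_perp q D e2 X = 0.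
Proof.
(* X need not be invertible: invmx X commutes with every factor and is never cancelled. *)
rewrite /p_perp /h_perp; set V := invmx X; set A := X - τ%:M.
set B := X - (τ^-1 * Q ^- D)%:M; set P := \prod_(1 <= n < D) _.
have ABV : GRing.comm (A * B) (V ^+ (D - 1)).
  by apply/commrX/commr_sym/commrM; exact: comm_invmx_subC.
have BP : GRing.comm B P.
  by apply: commr_prod => n _; apply: commrM; exact: comm_mx_subC.
rewrite mulrA -(mulrA V) ABV -!mulrA BP [A * _]mulrA.
by rewrite /A /B /P -flag_prodE flag_prod_eq0 !mulr0.
Qed.

End DualPolar.

Theorem lemma9p4 (q D e2 : nat) :
  prime_power q -> (3 <= D)%N -> (e2 <= 4)%N ->
  (odd e2 -> exists r : nat, q = (r ^ 2)%N) ->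
  p_perp q D e2 (Xmat q D e2) * h_perp q D e2 (Xmat q D e2) = 0.
Proof.
move=> [p [k [p_prime [k_gt0 ->]]]] D_ge3 _ _.
apply: p_perp_h_perp_Xmat; last exact: leq_trans D_ge3.
by rewrite -(exp1n k) ltn_exp2r // prime_gt1.
Qed.
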